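(* Let $\mathcal B$ be a unital $*$-algebra, $\phi:\mathcal B\to\mathbb C$ a positive faithful star-linear functional and $\gamma:\mathcal B\to\mathcal B$ a star-linear map such that $\gamma+\phi$ is completely positive. If for some $t<1$ the map $\gamma+t\phi$ is still completely positive, then the sesquilinear form $\langle\cdot,\cdot\rangle_{\gamma,\phi}$ on the algebraic Fock space $\mathcal F_{alg}(\mathcal B)$ is non-degenerate, i.e. $\langle\xi,\xi\rangle_{\gamma,\phi}=0$ implies $\xi=0$.
   Context: For a star-linear $\psi:\mathcal B\to\mathbb C$ and scalar $s$, $(\gamma+s\psi)[b]:=\gamma[b]+s\psi[b]1_{\mathcal B}$. A map $T:\mathcal B\to\mathcal B$ is completely positive if for every $n$ the entrywise map $M_n(\mathcal B)\to M_n(\mathcal B)$ sends positive elements (finite sums $\sum u_i^*u_i$) to positive elements. $\phi$ is faithful if $\phi[u^*u]=0$ only for $u=0$. The algebraic Fock space is $\mathcal F_{alg}(\mathcal B)=\mathbb C\Omega\oplus\bigoplus_{n\ge1}\mathcal B^{\otimes n}$ (algebraic tensor powers), with the sesquilinear form determined by $\langle\Omega,\Omega\rangle_{\gamma,\phi}=1$, $\Omega$ orthogonal to all tensors, and $\langle u_1\otimes\cdots\otimes u_n, v_1\otimes\cdots\otimes v_k\rangle_{\gamma,\phi}=\delta_{n=k}\,\phi\big[v_n^*(\gamma+\phi)[v_{n-1}^*(\gamma+\phi)[\cdots(\gamma+\phi)[v_1^*u_1]\cdots]u_{n-1}]u_n\big]$, extended linearly in the first and antilinearly in the second argument. *)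

From HB Require Import structures.
From mathcomp Require Import all_boot all_order all_algebra.
From mathcomp Require Import complex.
From mathcomp Require Import reals.

Set Implicit Arguments.
Unset Strict Implicit.
Unset Printing Implicit Defensive.

Import Order.TTheory GRing.Theory Num.Theory.
Local Open Scope ring_scope.

Section Defs.
Variables (C : numClosedFieldType) (B : algType C).

Definition star_involution (star : B -> B) : Prop :=
  [/\ involutive star,
      forall x y, star (x + y) = star x + star y,
      forall (a : C) x, star (a *: x) = a^* *: star x &
      forall x y, star (x * y) = star y * star x].

Definition star_linear_functional (star : B -> B) (psi : B -> C) : Prop :=
  (forall (a : C) x y, psi (a *: x + y) = a * psi x + psi y) /\
  (forall x, psi (star x) = (psi x)^*).

Definition star_linear_map (star : B -> B) (T : B -> B) : Prop :=
  (forall (a : C) x y, T (a *: x + y) = a *: T x + T y) /\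
  (forall x, T (star x) = star (T x)).

Definition positive_functional (star : B -> B) (phi : B -> C) : Prop :=
  forall u, 0 <= phi (star u * u).

Definition faithful_functional (star : B -> B) (phi : B -> C) : Prop :=
  forall u, phi (star u * u) = 0 -> u = 0.

(* (gamma + s psi)[b] := gamma[b] + s psi[b] 1_B *)
Definition shift (gamma : B -> B) (psi : B -> C) (s : C) : B -> B :=
  fun b => gamma b + (s * psi b) *: 1.

Definition mxstar (star : B -> B) n (U : 'M[B]_n) : 'M[B]_n :=
  \matrix_(i, j) star (U j i).

Definition mx_positive (star : B -> B) n (X : 'M[B]_n) : Prop :=
  exists s : seq 'M[B]_n, X = \sum_(U <- s) (mxstar star U *m U).

Definition completely_positive (star : B -> B) (T : B -> B) : Prop :=
  forall n (X : 'M[B]_n), mx_positive star X -> mx_positive star (map_mx T X).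

(* A word [:: u_1; ...; u_n] stands for u_1 (x) ... (x) u_n; the empty word
   stands for Omega.  An element of F_alg(B) is represented by a formal
   finite linear combination of words. *)
Definition fock := seq (C * seq B).

Fixpoint word_aux (star : B -> B) (T : B -> B) (a : B) (u v : seq B) : B :=
  match u, v with
  | x :: u', y :: v' => word_aux star T (star y * T a * x) u' v'
  | _, _ => a
  end.

Definition word_form (star : B -> B) (gamma : B -> B) (phi : B -> C)
    (u v : seq B) : C :=
  if size u != size v then 0 else
  match u, v with
  | x :: u', y :: v' =>
      phi (word_aux star (shift gamma phi 1) (star y * x) u' v')
  | _, _ => 1
  end.

Definition fock_form (star : B -> B) (gamma : B -> B) (phi : B -> C)
    (xi eta : fock) : C :=
  \sum_(p <- xi) \sum_(q <- eta) p.1 * (q.1)^* * word_form star gamma phi p.2 q.2.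

Definition fcoef (xi : fock) (w : seq B) : C :=
  \sum_(p <- xi | p.2 == w) p.1.

(* multilinearity relation vectors  (p, s, c, x, y) :
   [p ++ (c x + y) :: s] - c [p ++ x :: s] - [p ++ y :: s] *)
Definition mlrel := (seq B * seq B * C * B * B)%type.

Definition relvec (r : mlrel) (w : seq B) : C :=
  let: (p, s, c, x, y) := r in
  (w == p ++ (c *: x + y) :: s)%:R - c * (w == p ++ x :: s)%:R
  - (w == p ++ y :: s)%:R.

(* xi represents 0 in F_alg(B) = C Omega (+) (+)_n B^{(x)n}: its coefficient
   function lies in the span of the multilinearity relations *)
Definition fock_zero (xi : fock) : Prop :=
  exists rs : seq (C * mlrel),
    forall w, fcoef xi w = \sum_(r <- rs) r.1 * relvec r.2 w.

End Defs.

From HB Require Import structures.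
From mathcomp Require Import all_boot all_order all_algebra.
From mathcomp Require Import complex.
From mathcomp Require Import reals.
From mathcomp Require Import ring.
Import Order.TTheory GRing.Theory Num.Theory.
Local Open Scope ring_scope.

Set Implicit Arguments.
Unset Strict Implicit.
Unset Printing Implicit Defensive.

(* Gram-Schmidt for the inner product <x, y> = phi (y^* x), definite because phi
   is faithful, yields a finite orthogonal family E spanning every letter of xi.
   Modulo the multilinearity relations xi is then a combination of words in E,
   and expanding along E does not change <xi, xi>.  The form does not mix words
   of different lengths.  Write a word of length n + 1 as u x with x in E; since
   gamma + phi = (gamma + t phi) + (1 - t) phi(.) 1, the form on such words is a
   term that is nonnegative because gamma + t phi is completely positive, plus
   (1 - t) sum_{y in E} phi (y^* y) <xi_y, xi_y>, where xi_y collects the words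
   ending in y with that letter removed; each <xi_y, xi_y> is nonnegative because
   gamma + phi is completely positive.  So <xi, xi> = 0 forces <xi_y, xi_y> = 0
   for every y, and induction on the length shows that all coefficients of xi
   vanish. *)

Lemma rcons_take_nth (A : Type) (a0 : A) n (s : seq A) :
  size s = n.+1 -> s = rcons (take n s) (nth a0 s n).
Proof. by move=> ss; rewrite -take_nth ?ss // -ss take_size. Qed.

(** * Multilinearity relations *)

Section Relations.
Variables (C : numClosedFieldType) (B : algType C).

(* [fock_zero xi] is [relspan (fcoef xi)]. *)
Definition relspan (f : seq B -> C) : Prop :=
  exists rs : seq (C * mlrel B), forall w, f w = \sum_(r <- rs) r.1 * relvec r.2 w.

Lemma relspan_ext f g : f =1 g -> relspan f -> relspan g.
Proof. by move=> fg [rs h]; exists rs => w; rewrite -fg h. Qed.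

Lemma relspan0 : relspan (fun _ => 0).
Proof. by exists [::] => w; rewrite big_nil. Qed.

Lemma relspanD f g : relspan f -> relspan g -> relspan (fun w => f w + g w).
Proof. by move=> [r1 h1] [r2 h2]; exists (r1 ++ r2) => w; rewrite big_cat h1 h2. Qed.

Lemma relspanZ k f : relspan f -> relspan (fun w => k * f w).
Proof.
move=> [rs h]; exists [seq (k * r.1, r.2) | r <- rs] => w.
by rewrite big_map h mulr_sumr; apply: eq_bigr => r _ /=; rewrite mulrA.
Qed.

Lemma relspan_sum (I : eqType) (s : seq I) (F : I -> seq B -> C) :
  {in s, forall i, relspan (F i)} -> relspan (fun w => \sum_(i <- s) F i w).
Proof.
elim: s => [|i s IH] h; first by apply: relspan_ext relspan0 => w; rewrite big_nil.
have hs : {in s, forall j, relspan (F j)} by move=> j js; apply: h; rewrite inE js orbT.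
by apply: relspan_ext (relspanD (h i (mem_head _ _)) (IH hs)) => w; rewrite big_cons.
Qed.

Lemma relspan_relvec r : relspan (relvec r).
Proof. by exists [:: (1, r)] => w; rewrite big_seq1 mul1r. Qed.

(* The coefficient function of e (x) xi, if f is that of xi. *)
Definition ltensor (e : B) (f : seq B -> C) (w : seq B) : C :=
  if w is e' :: w' then (e' == e)%:R * f w' else 0.

Definition relcons (e : B) (r : mlrel B) : mlrel B :=
  let: (p, s, c, x, y) := r in (e :: p, s, c, x, y).

Lemma relvec_cons e r : relvec (relcons e r) =1 ltensor e (relvec r).
Proof.
case: r => [[[[p s] c] x] y] [|e' w] /=; first by rewrite !mulr0 !subr0.
by rewrite !eqseq_cons; case: (e' == e); rewrite ?mul1r ?mul0r // !mulr0 !subr0.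
Qed.

Lemma relspan_ltensor e f : relspan f -> relspan (ltensor e f).
Proof.
move=> [rs h]; exists [seq (r.1, relcons e r.2) | r <- rs] => w.
rewrite big_map; under eq_bigr do rewrite relvec_cons.
case: w => [|e' w] /=; first by rewrite big1 // => r _; rewrite mulr0.
by rewrite h mulr_sumr; apply: eq_bigr => r _; rewrite mulrCA.
Qed.

Lemma ltensor_word e u : ltensor e (fun w => (u == w)%:R) =1 (fun w => (e :: u == w)%:R).
Proof.
case=> [|e' w] //=; rewrite eqseq_cons eq_sym.
by case: (e == e'); case: (u == w); rewrite ?mul1r ?mul0r.
Qed.

Lemma ltensorB e f g w :
  ltensor e (fun w => f w - g w) w = ltensor e f w - ltensor e g w.
Proof. by case: w => [|e' w] /=; rewrite ?subr0 // mulrBr. Qed.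

Lemma relspan_letter_sum p s (E : seq B) (k : B -> C) :
  relspan (fun w => (p ++ (\sum_(e <- E) k e *: e) :: s == w)%:R
                    - \sum_(e <- E) k e * (p ++ e :: s == w)%:R).
Proof.
elim: E => [|e E IH].
  apply: relspan_ext (relspanZ (-1) (relspan_relvec (p, s, 1, 0, 0))) => w /=.
  by rewrite !big_nil scale1r addr0 subr0 mul1r eq_sym; ring.
have rel_e := relspan_relvec (p, s, k e, e, \sum_(e' <- E) k e' *: e').
apply: relspan_ext (relspanD rel_e IH).
by move=> w /=; rewrite !big_cons !(eq_sym w); ring.
Qed.

Section Expansion.
Variables (E : seq B) (coord : B -> B -> C).

Definition spanned (x : B) : Prop := x = \sum_(e <- E) coord e x *: e.

Fixpoint expand (u : seq B) : fock B :=
  if u is x :: u' then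
    flatten [seq [seq (coord e x * q.1, e :: q.2) | q <- expand u'] | e <- E]
  else [:: (1, [::])].

Lemma expand_words u q : q \in expand u -> size q.2 = size u /\ all (mem E) q.2.
Proof.
elim: u q => [|x u IH] q /=; first by rewrite inE => /eqP->.
by case/flatten_mapP => e eE /mapP [q' /IH [sq' q'E] ->] /=; rewrite sq' q'E eE.
Qed.

Lemma size_expand u q : q \in expand u -> size q.2 = size u.
Proof. by case/expand_words. Qed.

Lemma fcoef_expand_cons x u :
  fcoef (expand (x :: u)) =1
  (fun w => \sum_(e <- E) coord e x * ltensor e (fcoef (expand u)) w).
Proof.
move=> w; rewrite /fcoef /= big_flatten big_map; apply: eq_bigr => e _.
rewrite big_map /=; case: w => [|e' w] /=; first by rewrite big_pred0 ?mulr0.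
rewrite (eq_bigl (fun q => (e == e') && (q.2 == w))) => [|q]; last by rewrite eqseq_cons.
rewrite [e' == e]eq_sym; case: (e == e') => /=; first by rewrite mul1r mulr_sumr.
by rewrite big_pred0_eq ?mul0r ?mulr0.
Qed.

Lemma relspan_expand (u : seq B) : {in u, forall x, spanned x} ->
  relspan (fun w => (u == w)%:R - fcoef (expand u) w).
Proof.
elim: u => [|x u IH] sp.
  apply: relspan_ext relspan0 => w; rewrite /fcoef /= big_cons big_nil.
  by case: ([::] == w); rewrite ?addr0 subrr.
have spu : {in u, forall y, spanned y} by move=> y yu; apply: sp; rewrite inE yu orbT.
have IHe : {in E, forall e, relspan (fun w => coord e x *
    ltensor e (fun w => (u == w)%:R - fcoef (expand u) w) w)}.
  by move=> e _; apply/relspanZ/relspan_ltensor/IH.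
apply: relspan_ext (relspanD (relspan_letter_sum [::] u E (coord^~ x)) (relspan_sum IHe)).
move=> w /=; rewrite -(sp x (mem_head _ _)) fcoef_expand_cons.
have -> : \sum_(e <- E) coord e x *
    ltensor e (fun w => (u == w)%:R - fcoef (expand u) w) w =
  \sum_(e <- E) coord e x * (e :: u == w)%:R -
  \sum_(e <- E) coord e x * ltensor e (fcoef (expand u)) w.
  by rewrite -sumrB; apply: eq_bigr => e _; rewrite ltensorB ltensor_word mulrBr.
by ring.
Qed.

Definition expand_fock (xi : fock B) : fock B :=
  flatten [seq [seq (p.1 * q.1, q.2) | q <- expand p.2] | p <- xi].

Lemma expand_fock_words xi p : p \in expand_fock xi -> all (mem E) p.2.
Proof. by case/flatten_mapP => q _ /mapP [r /expand_words [_ rE] ->]. Qed.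

Lemma fock_zero_expand (xi : fock B) :
  (forall p, p \in xi -> {in p.2, forall x, spanned x}) ->
  fcoef (expand_fock xi) =1 (fun _ => 0) -> fock_zero xi.
Proof.
move=> sp xi0; have : {in xi, forall p, relspan (fun w => p.1 *
    ((p.2 == w)%:R - fcoef (expand p.2) w))}.
  by move=> p /sp/relspan_expand/relspanZ.
move=> /relspan_sum; apply: relspan_ext => w.
transitivity (fcoef xi w - fcoef (expand_fock xi) w); last by rewrite xi0 subr0.
rewrite /fcoef /expand_fock big_flatten big_map.
rewrite [X in X - _]big_mkcond -sumrB; apply: eq_bigr => p _.
rewrite big_map /= -mulr_sumr mulrBr; congr (_ - _).
by case: (p.2 == w); rewrite ?mulr1 ?mulr0.
Qed.

End Expansion.
End Relations.

(** * Gram-Schmidt for phi (y^* x) *)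

Section StarAlgebra.
Variables (C : numClosedFieldType) (B : algType C) (star : B -> B)
  (phi : B -> C) (gamma : B -> B).
Hypotheses (Hstar : star_involution star)
  (Hphi : star_linear_functional star phi)
  (Hpos : positive_functional star phi)
  (Hfaith : faithful_functional star phi)
  (Hgamma : star_linear_map star gamma).

Lemma starK : involutive star.
Proof. by case: Hstar. Qed.

Lemma starD x y : star (x + y) = star x + star y.
Proof. by case: Hstar. Qed.

Lemma starZ (a : C) x : star (a *: x) = a^* *: star x.
Proof. by case: Hstar. Qed.

Lemma starM x y : star (x * y) = star y * star x.
Proof. by case: Hstar. Qed.

Lemma star0 : star 0 = 0.
Proof. by apply: (addrI (star 0)); rewrite -starD !addr0. Qed.

Lemma star_sum (I : Type) (s : seq I) (F : I -> B) :
  star (\sum_(i <- s) F i) = \sum_(i <- s) star (F i).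
Proof. exact: (big_morph star starD star0). Qed.

Lemma phi0 : phi 0 = 0.
Proof.
case: Hphi => phi_lin _; apply: (addrI (phi 0)).
by have := phi_lin 1 0 0; rewrite scale1r addr0 mul1r => <-; rewrite addr0.
Qed.

Lemma phiD x y : phi (x + y) = phi x + phi y.
Proof. by case: Hphi => phi_lin _; rewrite -{1}[x]scale1r phi_lin mul1r. Qed.

Lemma phiZ (a : C) x : phi (a *: x) = a * phi x.
Proof. by case: Hphi => phi_lin _; rewrite -[a *: x]addr0 phi_lin phi0 addr0. Qed.

Lemma phiN x : phi (- x) = - phi x.
Proof. by rewrite -scaleN1r phiZ mulN1r. Qed.

Lemma phi_sum (I : Type) (s : seq I) (F : I -> B) :
  phi (\sum_(i <- s) F i) = \sum_(i <- s) phi (F i).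
Proof. exact: (big_morph phi phiD phi0). Qed.

Lemma phi_star x : phi (star x) = (phi x)^*.
Proof. by case: Hphi. Qed.

Lemma gamma0 : gamma 0 = 0.
Proof.
case: Hgamma => gamma_lin _; apply: (addrI (gamma 0)).
by have := gamma_lin 1 0 0; rewrite !scale1r addr0 => <-; rewrite addr0.
Qed.

Lemma gammaD x y : gamma (x + y) = gamma x + gamma y.
Proof. by case: Hgamma => gamma_lin _; rewrite -{1}[x]scale1r gamma_lin scale1r. Qed.

Lemma gammaZ (a : C) x : gamma (a *: x) = a *: gamma x.
Proof. by case: Hgamma => gamma_lin _; rewrite -[a *: x]addr0 gamma_lin gamma0 addr0. Qed.

Lemma shiftD s x y :
  shift gamma phi s (x + y) = shift gamma phi s x + shift gamma phi s y.
Proof. by rewrite /shift gammaD phiD mulrDr scalerDl addrACA. Qed.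

Lemma shiftZ s (a : C) x : shift gamma phi s (a *: x) = a *: shift gamma phi s x.
Proof. by rewrite /shift gammaZ phiZ scalerDr scalerA mulrCA. Qed.

Lemma shift0 s : shift gamma phi s 0 = 0.
Proof. by rewrite -{1}(scale0r (0 : B)) shiftZ scale0r. Qed.

Lemma shift1E t x : shift gamma phi 1 x = shift gamma phi t x + ((1 - t) * phi x) *: 1.
Proof. by rewrite /shift -addrA -scalerDl -mulrDl [t + _]addrC subrK. Qed.

Definition pdot (x y : B) : C := phi (star y * x).

Lemma pdotDl x y z : pdot (x + y) z = pdot x z + pdot y z.
Proof. by rewrite /pdot mulrDr phiD. Qed.

Lemma pdotZl (a : C) x z : pdot (a *: x) z = a * pdot x z.
Proof. by rewrite /pdot -scalerAr phiZ. Qed.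

Lemma pdotBl x y z : pdot (x - y) z = pdot x z - pdot y z.
Proof. by rewrite pdotDl /pdot mulrN phiN. Qed.

Lemma pdot0l z : pdot 0 z = 0.
Proof. by rewrite /pdot mulr0 phi0. Qed.

Lemma pdot_suml (I : Type) (s : seq I) (F : I -> B) z :
  pdot (\sum_(i <- s) F i) z = \sum_(i <- s) pdot (F i) z.
Proof. exact: (big_morph (pdot^~ z) (fun x y => pdotDl x y z) (pdot0l z)). Qed.

Lemma pdotC x y : pdot y x = (pdot x y)^*.
Proof. by rewrite /pdot -phi_star starM starK. Qed.

Lemma pdot_sumr (I : Type) (s : seq I) (k : I -> C) (F : I -> B) x :
  pdot x (\sum_(i <- s) k i *: F i) = \sum_(i <- s) (k i)^* * pdot x (F i).
Proof.
rewrite pdotC pdot_suml rmorph_sum; apply: eq_bigr => i _.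
by rewrite pdotZl rmorphM [pdot x _]pdotC.
Qed.

Definition fourier (e x : B) : C := pdot x e / pdot e e.

Definition pdot_orthogonal (E : seq B) : Prop :=
  [/\ uniq E, {in E, forall e, pdot e e != 0} &
      {in E &, forall e e', e != e' -> pdot e e' = 0}].

Lemma pdot_orthogonalE E x y : pdot_orthogonal E -> x \in E -> y \in E ->
  pdot x y = (x == y)%:R * pdot y y.
Proof.
case=> _ _ oE xE yE; have [->|ne] := eqVneq x y; first by rewrite mul1r.
by rewrite mul0r oE.
Qed.

Lemma sum_pdot_orthogonal E (F : B -> C) y : pdot_orthogonal E -> y \in E ->
  \sum_(e <- E) F e * pdot e y = F y * pdot y y.
Proof.
move=> oE yE; have [uE _ _] := oE.
rewrite (bigD1_seq y) //= big_seq_cond big1 ?addr0 // => e /andP[eE ne].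
by rewrite (pdot_orthogonalE oE) // (negbTE ne) mul0r mulr0.
Qed.

Lemma pdot_orthogonal_sum E x x' : pdot_orthogonal E -> x \in E -> x' \in E ->
  pdot x x' = \sum_(y <- E) (x == y)%:R * (x' == y)%:R * pdot y y.
Proof.
move=> oE xE x'E; have [uE _ _] := oE.
rewrite (bigD1_seq x) //= eqxx mul1r big1 ?addr0.
  by rewrite (pdot_orthogonalE oE) // eq_sym; case: eqP => [->|]; rewrite ?mul0r.
by move=> y; rewrite eq_sym => /negbTE ->; rewrite !mul0r.
Qed.

Definition residual (E : seq B) (x : B) : B := x - \sum_(e <- E) fourier e x *: e.

Lemma pdot_residual E x e : pdot_orthogonal E -> e \in E -> pdot (residual E x) e = 0.
Proof.
move=> oE eE; have [_ nzE _] := oE.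
rewrite pdotBl pdot_suml; under eq_bigr do rewrite pdotZl.
by rewrite (sum_pdot_orthogonal _ oE eE) divfK ?subrr ?nzE.
Qed.

Lemma pdot_orthogonal_cons E r : pdot_orthogonal E -> r != 0 ->
  {in E, forall e, pdot r e = 0} -> pdot_orthogonal (r :: E).
Proof.
move=> [uE nzE oE] r_neq0 rE.
have rr : pdot r r != 0 by apply: contra_neq r_neq0 => /Hfaith.
have rNE : r \notin E by apply: contra rr => /rE ->.
split; first by rewrite /= rNE.
  by move=> e; rewrite inE => /predU1P [->|/nzE].
move=> e e'; rewrite !inE => /predU1P [->|eE] /predU1P [->|e'E]; rewrite ?eqxx //.
- by move=> _; rewrite rE.
- by move=> _; rewrite pdotC rE // conjC0.
- exact: oE.
Qed.

Lemma spanned_cons E r z : {in E, forall e, pdot e r = 0} ->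
  spanned E fourier z -> spanned (r :: E) fourier z.
Proof.
move=> Er spz; rewrite /spanned big_cons.
suff -> : fourier r z = 0 by rewrite scale0r add0r.
rewrite /fourier {1}spz pdot_suml big_seq big1 ?mul0r // => e eE.
by rewrite pdotZl Er ?mulr0.
Qed.

Lemma spanned_residual E x : pdot_orthogonal E -> residual E x != 0 ->
  spanned (residual E x :: E) fourier x.
Proof.
move=> oE r_neq0; set r := residual E x.
have Er : {in E, forall e, pdot e r = 0}.
  by move=> e eE; rewrite pdotC pdot_residual // conjC0.
have rr : pdot r r != 0 by apply: contra_neq r_neq0 => /Hfaith.
have xE : x = r + \sum_(e <- E) fourier e x *: e by rewrite subrK.
rewrite /spanned big_cons.
suff -> : fourier r x = 1 by rewrite scale1r -xE.
rewrite /fourier {1}xE pdotDl pdot_suml big_seq big1 ?addr0 ?divff // => e eE.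
by rewrite pdotZl Er ?mulr0.
Qed.

Lemma gram_schmidt (L : seq B) :
  exists2 E, pdot_orthogonal E & {in L, forall x, spanned E fourier x}.
Proof.
elim: L => [|x L [E oE spE]]; first by exists [::].
have Er : {in E, forall e, pdot e (residual E x) = 0}.
  by move=> e eE; rewrite pdotC pdot_residual // conjC0.
have [r0|r_neq0] := eqVneq (residual E x) 0.
  exists E => // z; rewrite inE => /predU1P [->|/spE //].
  by apply/eqP; rewrite -subr_eq0 -/(residual E x) r0.
exists (residual E x :: E).
  by apply: pdot_orthogonal_cons => // e; apply: pdot_residual.
move=> z; rewrite inE => /predU1P [->|zL]; first exact: spanned_residual.
by apply: spanned_cons; [exact: Er | exact: spE].
Qed.

(** * Invariance of the form under expansion *)

Local Notation T := (shift gamma phi 1).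
Local Notation WA := (word_aux star T).
Local Notation WF := (word_form star gamma phi).
Local Notation FF := (fock_form star gamma phi).

Lemma word_auxDZ u v (k : C) a b : WA (k *: a + b) u v = k *: WA a u v + WA b u v.
Proof.
elim: u v a b => [|x u IH] [|y v] a b //=.
by rewrite shiftD shiftZ mulrDr mulrDl -scalerAr -scalerAl IH.
Qed.

Lemma word_aux0 u v : WA 0 u v = 0.
Proof. by elim: u v => [|x u IH] [|y v] //=; rewrite shift0 mulr0 mul0r IH. Qed.

Lemma word_aux_sumZ (I : Type) (s : seq I) (k : I -> C) (F : I -> B) u v :
  WA (\sum_(i <- s) k i *: F i) u v = \sum_(i <- s) k i *: WA (F i) u v.
Proof.
elim: s => [|i s IH]; first by rewrite !big_nil word_aux0.
by rewrite !big_cons word_auxDZ IH.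
Qed.

Lemma word_aux_rcons u v a x y : size u = size v ->
  WA a (rcons u x) (rcons v y) = star y * T (WA a u v) * x.
Proof. by elim: u v a => [|x' u IH] [|y' v] a //= [/IH ->]. Qed.

Lemma word_form_cons x y u v : size u = size v ->
  WF (x :: u) (y :: v) = phi (WA (star y * x) u v).
Proof. by move=> e; rewrite /word_form /= eqSS e eqxx. Qed.

Lemma word_form_size u v : size u != size v -> WF u v = 0.
Proof. by rewrite /word_form => ->. Qed.

Section Expansion.
Variables (E : seq B) (coord : B -> B -> C).
Local Notation spannedE := (spanned E coord).
Local Notation expandE := (expand E coord).

Lemma word_aux_spanned_l x b u v : spannedE x ->
  \sum_(e <- E) coord e x *: WA (b * e) u v = WA (b * x) u v.
Proof.
move=> spx; rewrite -word_aux_sumZ {2}spx mulr_sumr.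
by congr WA; apply: eq_bigr => e _; rewrite scalerAr.
Qed.

Lemma word_aux_spanned_r y b u v : spannedE y ->
  \sum_(e <- E) (coord e y)^* *: WA (star e * b) u v = WA (star y * b) u v.
Proof.
move=> spy; rewrite -word_aux_sumZ {2}spy star_sum mulr_suml.
by congr WA; apply: eq_bigr => e _; rewrite starZ scalerAl.
Qed.

Lemma word_aux_expand_l u v a : size u = size v -> {in u, forall x, spannedE x} ->
  \sum_(q <- expandE u) q.1 *: WA a q.2 v = WA a u v.
Proof.
elim: u v a => [|x u IH] [|y v] a //=; first by rewrite big_seq1 scale1r.
move=> [suv] sp; have spu : {in u, forall z, spannedE z}.
  by move=> z zu; apply: sp; rewrite inE zu orbT.
rewrite big_flatten big_map /= -(word_aux_spanned_l _ _ _ (sp x (mem_head _ _))).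
apply: eq_bigr => e _; rewrite big_map -(IH v) // scaler_sumr.
by apply: eq_bigr => q _; rewrite scalerA.
Qed.

Lemma word_aux_expand_r u v a : size u = size v -> {in v, forall y, spannedE y} ->
  \sum_(q <- expandE v) (q.1)^* *: WA a u q.2 = WA a u v.
Proof.
elim: v u a => [|y v IH] [|x u] a //=; first by rewrite big_seq1 conjC1 scale1r.
move=> [suv] sp; have spv : {in v, forall z, spannedE z}.
  by move=> z zv; apply: sp; rewrite inE zv orbT.
rewrite big_flatten big_map /= -mulrA -(word_aux_spanned_r _ _ _ (sp y (mem_head _ _))).
apply: eq_bigr => e _; rewrite big_map -(IH u) // scaler_sumr.
by apply: eq_bigr => q _; rewrite scalerA rmorphM mulrA.
Qed.

Lemma word_form_expand_l (u v : seq B) : {in u, forall x, spannedE x} ->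
  \sum_(q <- expandE u) q.1 * WF q.2 v = WF u v.
Proof.
move=> sp; have [suv|ne] := eqVneq (size u) (size v); last first.
  rewrite word_form_size // big_seq big1 // => q /size_expand sq.
  by rewrite word_form_size ?mulr0 // sq.
case: u v suv sp => [|x u] [|y v] //= suv sp; first by rewrite big_seq1 mul1r.
have spu : {in u, forall z, spannedE z} by move=> z zu; apply: sp; rewrite inE zu orbT.
move: suv => [suv]; rewrite big_flatten big_map /= word_form_cons //.
rewrite -(word_aux_spanned_l _ _ _ (sp x (mem_head _ _))) phi_sum.
apply: eq_bigr => e _; rewrite big_map /= phiZ -(word_aux_expand_l _ suv spu).
rewrite phi_sum mulr_sumr big_seq [RHS]big_seq; apply: eq_bigr => q /size_expand sq.
by rewrite word_form_cons ?sq // phiZ mulrA.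
Qed.

Lemma word_form_expand_r (u v : seq B) : {in v, forall y, spannedE y} ->
  \sum_(q <- expandE v) (q.1)^* * WF u q.2 = WF u v.
Proof.
move=> sp; have [suv|ne] := eqVneq (size u) (size v); last first.
  rewrite word_form_size // big_seq big1 // => q /size_expand sq.
  by rewrite word_form_size ?mulr0 // sq.
case: u v suv sp => [|x u] [|y v] //= suv sp; first by rewrite big_seq1 conjC1 mul1r.
have spv : {in v, forall z, spannedE z} by move=> z zv; apply: sp; rewrite inE zv orbT.
move: suv => [suv]; rewrite big_flatten big_map /= word_form_cons //.
rewrite -(word_aux_spanned_r _ _ _ (sp y (mem_head _ _))) phi_sum.
apply: eq_bigr => e _; rewrite big_map /= phiZ -(word_aux_expand_r _ suv spv).
rewrite phi_sum mulr_sumr big_seq [RHS]big_seq; apply: eq_bigr => q /size_expand sq.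
by rewrite word_form_cons ?sq // phiZ rmorphM mulrA.
Qed.

Lemma fock_form_expand (xi : fock B) :
  (forall p, p \in xi -> {in p.2, forall x, spannedE x}) ->
  FF (expand_fock E coord xi) (expand_fock E coord xi) = FF xi xi.
Proof.
move=> sp; rewrite /fock_form {1}/expand_fock big_flatten big_map big_seq [RHS]big_seq.
apply: eq_bigr => p pin; rewrite big_map exchange_big /=.
transitivity (\sum_(q' <- expand_fock E coord xi) p.1 * q'.1^* * WF p.2 q'.2).
  apply: eq_bigr => q' _; rewrite -(word_form_expand_l _ (sp p pin)) mulr_sumr.
  by apply: eq_bigr => r _ /=; ring.
rewrite /expand_fock big_flatten big_map [LHS]big_seq [RHS]big_seq.
apply: eq_bigr => q qin; rewrite big_map /= -(word_form_expand_r _ (sp q qin)) mulr_sumr.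
by apply: eq_bigr => r _ /=; rewrite rmorphM; ring.
Qed.

End Expansion.

(** * Positivity *)

Lemma mxstar_mulE m (U V : 'M[B]_m) j i :
  (mxstar star U *m V) j i = \sum_k star (U k j) * V k i.
Proof. by rewrite mxE; apply: eq_bigr => k _; rewrite mxE. Qed.

Lemma mx_positive_diag_conj m (M : 'M[B]_m) (x : 'I_m -> B) : mx_positive star M ->
  mx_positive star (\matrix_(j, i) (star (x j) * M j i * x i)).
Proof.
move=> [s ->]; exists [seq \matrix_(k, i) (U k i * x i) | U : 'M[B]_m <- s].
apply/matrixP => j i; rewrite !mxE big_map !summxE mulr_sumr mulr_suml.
apply: eq_bigr => U _; rewrite !mxstar_mulE mulr_sumr mulr_suml.
by apply: eq_bigr => k _; rewrite !mxE starM !mulrA.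
Qed.

Lemma mx_positive_gram m (x : 'I_m -> B) :
  mx_positive star (\matrix_(j, i) (star (x j) * x i)).
Proof.
case: m x => [|m] x; first by exists [::]; apply/matrixP => [[]].
exists [:: \matrix_(k, i) (if k == ord0 then x i else 0)].
apply/matrixP => j i; rewrite big_seq1 mxstar_mulE big_ord_recl !mxE /= big1 ?addr0 //.
by move=> k _; rewrite !mxE /= star0 mul0r.
Qed.

Definition phi_quad m (c : 'I_m -> C) (P : 'M[B]_m) : C :=
  \sum_i \sum_j c i * (c j)^* * phi (P j i).

Lemma phi_quad_mx m (c : 'I_m -> C) (F : 'I_m -> 'I_m -> B) :
  phi_quad c (\matrix_(j, i) F j i) = \sum_i \sum_j c i * (c j)^* * phi (F j i).
Proof. by apply: eq_bigr => i _; apply: eq_bigr => j _; rewrite mxE. Qed.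

Lemma phi_quadD m (c : 'I_m -> C) P Q : phi_quad c (P + Q) = phi_quad c P + phi_quad c Q.
Proof.
rewrite /phi_quad -big_split; apply: eq_bigr => i _; rewrite -big_split.
by apply: eq_bigr => j _; rewrite mxE phiD mulrDr.
Qed.

Lemma phi_quad0 m (c : 'I_m -> C) : phi_quad c 0 = 0.
Proof.
by rewrite /phi_quad big1 // => i _; rewrite big1 // => j _; rewrite mxE phi0 mulr0.
Qed.

Lemma phi_quad_mxstar m (c : 'I_m -> C) U :
  phi_quad c (mxstar star U *m U) =
  \sum_k pdot (\sum_i c i *: U k i) (\sum_i c i *: U k i).
Proof.
rewrite /phi_quad.
under eq_bigr do under eq_bigr do rewrite mxstar_mulE phi_sum mulr_sumr.
under eq_bigr do rewrite exchange_big; rewrite exchange_big /=.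
apply: eq_bigr => k _; rewrite pdot_suml; apply: eq_bigr => i _.
rewrite pdotZl pdot_sumr mulr_sumr; apply: eq_bigr => j _.
by rewrite mulrA.
Qed.

Lemma phi_quad_ge0 m (c : 'I_m -> C) P : mx_positive star P -> 0 <= phi_quad c P.
Proof.
move=> [s ->]; rewrite (big_morph _ (phi_quadD c) (phi_quad0 c)).
apply: sumr_ge0 => U _; rewrite phi_quad_mxstar.
by apply: sumr_ge0 => k _; apply: Hpos.
Qed.

Definition word_kernel (u v : seq B) : B :=
  WA (star (head 0 v) * head 0 u) (behead u) (behead v).

Lemma word_form_kernel u v : size u = size v -> (0 < size u)%N ->
  WF u v = phi (word_kernel u v).
Proof. by case: u v => [|x u] [|y v] //= [suv] _; rewrite word_form_cons. Qed.

Lemma word_kernel1 u v : size u = 1%N -> size v = 1%N ->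
  word_kernel u v = star (head 0 v) * head 0 u.
Proof. by case: u v => [|x [|? ?]] [|y [|? ?]]. Qed.

Lemma word_kernel_rcons u v x y : size u = size v -> (0 < size u)%N ->
  word_kernel (rcons u x) (rcons v y) = star y * T (word_kernel u v) * x.
Proof.
by case: u v => [|x' u] [|y' v] //= [suv] _; rewrite /word_kernel /= word_aux_rcons.
Qed.

Lemma mx_positive_word_kernel (HT : completely_positive star T) n m
    (w : 'I_m -> seq B) : (forall i, size (w i) = n.+1) ->
  mx_positive star (\matrix_(j, i) word_kernel (w i) (w j)).
Proof.
elim: n m w => [|n IH] m w sw.
  have -> : \matrix_(j, i) word_kernel (w i) (w j) =
            \matrix_(j, i) (star (head 0 (w j)) * head 0 (w i)).
    by apply/matrixP => j i; rewrite !mxE word_kernel1.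
  exact: mx_positive_gram.
pose u i := take n.+1 (w i); pose x i := nth 0 (w i) n.+1.
have su i : size (u i) = n.+1 by rewrite size_takel // sw.
have -> : \matrix_(j, i) word_kernel (w i) (w j) = \matrix_(j, i)
    (star (x j) * map_mx T (\matrix_(j, i) word_kernel (u i) (u j)) j i * x i).
  apply/matrixP => j i; rewrite !mxE (rcons_take_nth 0 (sw i)) (rcons_take_nth 0 (sw j)).
  by rewrite word_kernel_rcons ?su.
exact/mx_positive_diag_conj/HT/IH.
Qed.

Definition kernel_quad m (c : 'I_m -> C) (w : 'I_m -> seq B) : C :=
  phi_quad c (\matrix_(j, i) word_kernel (w i) (w j)).

Lemma kernel_quad_ge0 (HT : completely_positive star T) n m c (w : 'I_m -> seq B) :
  (forall i, size (w i) = n.+1) -> 0 <= kernel_quad c w.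
Proof. by move=> sw; apply/phi_quad_ge0/(mx_positive_word_kernel HT sw). Qed.

Lemma fock_form_words_nil (z : fock B) : (forall p, p \in z -> p.2 = [::]) ->
  FF z z = (\sum_(p <- z) p.1) * (\sum_(p <- z) p.1)^*.
Proof.
move=> z0; rewrite /fock_form mulr_suml; apply: eq_big_seq => p pz.
rewrite rmorph_sum mulr_sumr; apply: eq_big_seq => q qz.
by rewrite (z0 p pz) (z0 q qz) /word_form /= mulr1.
Qed.

Lemma fock_form_kernel_quad n (z : fock B) : (forall p, p \in z -> size p.2 = n.+1) ->
  FF z z = kernel_quad (fun i : 'I_(size z) => (nth (0, [::]) z i).1)
                       (fun i => (nth (0, [::]) z i).2).
Proof.
move=> sz; rewrite /fock_form /kernel_quad phi_quad_mx (big_nth (0, [::])) big_mkord.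
apply: eq_bigr => i _; rewrite (big_nth (0, [::])) big_mkord; apply: eq_bigr => j _.
by rewrite word_form_kernel ?sz ?mem_nth.
Qed.

Definition level n (z : fock B) : fock B := [seq p <- z | size p.2 == n].

Lemma fcoef_level (z : fock B) v : fcoef (level (size v) z) v = fcoef z v.
Proof.
rewrite /fcoef big_filter_cond; apply: eq_bigl => p.
by case: (eqVneq p.2 v) => [->|]; rewrite ?eqxx ?andbF.
Qed.

Lemma fock_form_levels N (z : fock B) : (forall p, p \in z -> size p.2 < N)%N ->
  FF z z = \sum_(n < N) FF (level n z) (level n z).
Proof.
move=> ltN.
have levelE n : FF (level n z) (level n z) = \sum_(p <- z | size p.2 == n)
    \sum_(q <- z | size q.2 == n) p.1 * q.1^* * WF p.2 q.2.
  by rewrite /fock_form big_filter; apply: eq_bigr => p _; rewrite big_filter.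
under eq_bigr do rewrite levelE big_mkcond.
rewrite exchange_big /= /fock_form; apply: eq_big_seq => p pz.
rewrite -big_mkcond /= (big_pred1 (Ordinal (ltN p pz))) => [|n]; last first.
  by rewrite /= -val_eqE /= eq_sym.
rewrite [RHS]big_mkcond; apply: eq_bigr => q _; case: eqP => // ne.
by rewrite word_form_size ?mulr0 // eq_sym; apply/eqP.
Qed.

Section Definiteness.
Variables (E : seq B) (t : C).
Hypotheses (oE : pdot_orthogonal E) (t_lt1 : t < 1) (HT : completely_positive star T)
  (HS : completely_positive star (shift gamma phi t)).

Lemma kernel_quad_rcons n m c (u : 'I_m -> seq B) (x : 'I_m -> B) :
  (forall i, size (u i) = n.+1) -> (forall i, x i \in E) ->
  kernel_quad c (fun i => rcons (u i) (x i)) =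
  phi_quad c (\matrix_(j, i)
    (star (x j) * shift gamma phi t (word_kernel (u i) (u j)) * x i))
  + (1 - t) * \sum_(y <- E) pdot y y * kernel_quad (fun i => c i * (x i == y)%:R) u.
Proof.
move=> su xE; rewrite /kernel_quad !phi_quad_mx.
transitivity (\sum_i \sum_j (c i * (c j)^* *
    phi (star (x j) * shift gamma phi t (word_kernel (u i) (u j)) * x i) +
  (1 - t) * (c i * (c j)^* * phi (word_kernel (u i) (u j)) * pdot (x i) (x j)))).
  apply: eq_bigr => i _; apply: eq_bigr => j _.
  rewrite word_kernel_rcons ?su // (shift1E t) mulrDr mulrDl.
  by rewrite -scalerAr mulr1 -scalerAl phiD phiZ /pdot; ring.
under eq_bigr do rewrite big_split; rewrite big_split /=; congr (_ + _).
transitivity (\sum_i \sum_j \sum_(y <- E) (1 - t) * (pdot y y *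
    (c i * (x i == y)%:R * (c j * (x j == y)%:R)^* * phi (word_kernel (u i) (u j))))).
  apply: eq_bigr => i _; apply: eq_bigr => j _.
  rewrite (pdot_orthogonal_sum oE (xE i) (xE j)) !mulr_sumr; apply: eq_bigr => y _.
  by rewrite rmorphM rmorph_nat; ring.
under [in RHS]eq_bigr do rewrite phi_quad_mx.
under [LHS]eq_bigr do rewrite exchange_big; rewrite exchange_big mulr_sumr.
by apply: eq_bigr => y _; rewrite !mulr_sumr; apply: eq_bigr => i _; rewrite !mulr_sumr.
Qed.

Lemma kernel_quad_rcons_eq0 n m c (u : 'I_m -> seq B) (x : 'I_m -> B) :
  (forall i, size (u i) = n.+1) -> (forall i, x i \in E) ->
  kernel_quad c (fun i => rcons (u i) (x i)) = 0 ->
  {in E, forall y, kernel_quad (fun i => c i * (x i == y)%:R) u = 0}.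
Proof.
move=> su xE; have [_ nzE _] := oE.
have A_pos : mx_positive star
    (\matrix_(j, i) (star (x j) * shift gamma phi t (word_kernel (u i) (u j)) * x i)).
  have := mx_positive_diag_conj x (HS (mx_positive_word_kernel HT su)).
  by congr mx_positive; apply/matrixP => j i; rewrite !mxE.
have summand_ge0 y : 0 <= pdot y y * kernel_quad (fun i => c i * (x i == y)%:R) u.
  by apply: mulr_ge0; [exact: Hpos | exact: (kernel_quad_ge0 HT _ su)].
rewrite (kernel_quad_rcons _ su xE) => /eqP; rewrite paddr_eq0; last 2 first.
- exact: phi_quad_ge0.
- by apply: mulr_ge0; [rewrite subr_ge0 ltW | exact: sumr_ge0].
case/andP=> _; rewrite mulf_eq0 subr_eq0 (gt_eqF t_lt1) /= psumr_eq0 //.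
move=> /allP sum0 y yE; apply/eqP.
by have := sum0 y yE; rewrite /= mulf_eq0 (negbTE (nzE y yE)).
Qed.

Lemma kernel_quad_singleton_eq0 m c (x : 'I_m -> B) : (forall i, x i \in E) ->
  kernel_quad c (fun i => [:: x i]) = 0 -> {in E, forall y, \sum_(i | x i == y) c i = 0}.
Proof.
move=> xE; have [_ nzE _] := oE.
set z := \sum_i c i *: x i => Q0.
have z0 : z = 0.
  apply: Hfaith; rewrite -[LHS]/(pdot z z) -Q0 /kernel_quad phi_quad_mx /z pdot_suml.
  apply: eq_bigr => i _; rewrite pdotZl pdot_sumr mulr_sumr.
  by apply: eq_bigr => j _; rewrite mulrA.
move=> y yE; have : pdot z y = 0 by rewrite z0 pdot0l.
rewrite pdot_suml; under eq_bigr do rewrite pdotZl (pdot_orthogonalE oE (xE _) yE) mulrA.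
rewrite -mulr_suml => /eqP; rewrite mulf_eq0 (negbTE (nzE y yE)) orbF => /eqP S.
apply: etrans S; rewrite big_mkcond; apply: eq_bigr => i _.
by case: (x i == y); rewrite ?mulr1 ?mulr0.
Qed.

Lemma kernel_quad_eq0 n m c (w : 'I_m -> seq B) :
  (forall i, size (w i) = n.+1) -> (forall i, all (mem E) (w i)) ->
  kernel_quad c w = 0 -> forall v, \sum_(i | w i == v) c i = 0.
Proof.
elim: n m c w => [|n IH] m c w sw wE Q0 v.
  have [i0 /eqP <-|none] := pickP (fun i => w i == v); last by rewrite big_pred0.
  pose x i := head 0 (w i).
  have wx i : w i = [:: x i] by move: (sw i); rewrite /x; case: (w i) => [|a []].
  have xE i : x i \in E by move: (wE i); rewrite wx /= andbT.
  have Q0' : kernel_quad c (fun i => [:: x i]) = 0.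
    by rewrite -Q0; apply: eq_bigr => i _; apply: eq_bigr => j _; rewrite !mxE -!wx.
  apply: etrans (kernel_quad_singleton_eq0 xE Q0' (xE i0)).
  by apply: eq_bigl => i; rewrite !wx eqseq_cons andbT.
have [i0 /eqP <-|none] := pickP (fun i => w i == v); last by rewrite big_pred0.
pose u i := take n.+1 (w i); pose x i := nth 0 (w i) n.+1.
have wux i : w i = rcons (u i) (x i) by apply: rcons_take_nth.
have su i : size (u i) = n.+1 by rewrite size_takel // sw.
have Q0' : kernel_quad c (fun i => rcons (u i) (x i)) = 0.
  by rewrite -Q0; apply: eq_bigr => i _; apply: eq_bigr => j _; rewrite !mxE -!wux.
have xE i : x i \in E by move: (wE i); rewrite wux all_rcons => /andP[].
have uE i : all (mem E) (u i) by move: (wE i); rewrite wux all_rcons => /andP[].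
apply: etrans (IH _ _ u su uE (kernel_quad_rcons_eq0 su xE Q0' (xE i0)) (u i0)).
rewrite big_mkcond [RHS]big_mkcond /=; apply: eq_bigr => i _.
rewrite !wux eqseq_rcons.
by case: (u i == u i0); case: (x i == x i0); rewrite ?mulr1 ?mulr0.
Qed.

Lemma homogeneous_fock_form n (z : fock B) :
  (forall p, p \in z -> size p.2 = n) -> (forall p, p \in z -> all (mem E) p.2) ->
  0 <= FF z z /\ (FF z z = 0 -> fcoef z =1 (fun _ => 0)).
Proof.
case: n => [|n] sz zE.
  have z0 p : p \in z -> p.2 = [::] by move/sz/size0nil.
  rewrite fock_form_words_nil // mul_conjC_ge0; split=> // /eqP.
  rewrite mul_conjC_eq0 => /eqP sum0 v; rewrite /fcoef big_mkcond /=.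
  rewrite (eq_big_seq (fun p => p.1 * ([::] == v)%:R)) => [|p /z0 ->]; last first.
    by case: ([::] == v); rewrite ?mulr1 ?mulr0.
  by rewrite -mulr_suml sum0 mul0r.
have sz' (i : 'I_(size z)) : size (nth (0, [::]) z i).2 = n.+1 by rewrite sz ?mem_nth.
have zE' (i : 'I_(size z)) : all (mem E) (nth (0, [::]) z i).2 by rewrite zE ?mem_nth.
rewrite (fock_form_kernel_quad sz); split; first exact: (kernel_quad_ge0 HT _ sz').
move=> Q0 v; rewrite /fcoef (big_nth (0, [::])) big_mkord.
exact: kernel_quad_eq0 sz' zE' Q0 v.
Qed.

Lemma fock_form_eq0 (z : fock B) : (forall p, p \in z -> all (mem E) p.2) ->
  FF z z = 0 -> fcoef z =1 (fun _ => 0).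
Proof.
move=> zE z0; pose N := (\max_(p <- z) size p.2).+1.
have ltN p : p \in z -> (size p.2 < N)%N.
  by move=> pz; rewrite ltnS (@leq_bigmax_seq _ z xpredT (fun p => size p.2) p pz).
have hom n : 0 <= FF (level n z) (level n z) /\
    (FF (level n z) (level n z) = 0 -> fcoef (level n z) =1 (fun _ => 0)).
  apply: (@homogeneous_fock_form n) => p; rewrite mem_filter => /andP [pn pz].
    exact/eqP.
  exact: zE.
have level0 (n : 'I_N) : FF (level n z) (level n z) = 0.
  apply: (@psumr_eq0P _ _ xpredT (fun n : 'I_N => FF (level n z) (level n z))) => //.
    by move=> k _; exact: (hom k).1.
  by rewrite -fock_form_levels.
move=> v; have [vN|vN] := ltnP (size v) N.
  by rewrite -fcoef_level (hom (size v)).2 // (level0 (Ordinal vN)).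
rewrite /fcoef big_seq_cond big1 // => p /andP[pz /eqP pv].
by have := ltN p pz; rewrite pv ltnNge vN.
Qed.

End Definiteness.

End StarAlgebra.

Unset Implicit Arguments.
Set Strict Implicit.
Local Open Scope complex_scope.

Theorem lemma2p4 (R : realType) (B : algType R[i]) (star : B -> B)
    (phi : B -> R[i]) (gamma : B -> B) :
  star_involution star ->
  star_linear_functional star phi ->
  positive_functional star phi ->
  faithful_functional star phi ->
  star_linear_map star gamma ->
  completely_positive star (shift gamma phi 1) ->
  (exists2 t : R[i], t < 1 & completely_positive star (shift gamma phi t)) ->
  forall xi : fock B, fock_form star gamma phi xi xi = 0 -> fock_zero xi.
Proof.
move=> Hstar Hphi Hpos Hfaith Hgamma HT [t t_lt1 HS] xi xi0.
have [E oE spE] := gram_schmidt Hstar Hphi Hfaith (flatten [seq p.2 | p <- xi]).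
have sp p : p \in xi -> {in p.2, forall x, spanned E (fourier star phi) x}.
  by move=> pxi x xp; apply: spE; apply/flatten_mapP; exists p.
apply: (fock_zero_expand sp).
apply: (fock_form_eq0 Hstar Hphi Hpos Hfaith oE t_lt1 HT HS).
  exact: expand_fock_words.
by rewrite fock_form_expand.
Qed.
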